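(* A bidirectional graph $G$ is 2-rooted if and only if it contains a DEP-induced graph as a spanning subgraph.
   Context: Graphs $G=(V,E)$ are directed with $E\subseteq\{(i,k):i\ne k\}$. $G$ is bidirectional if $(i,j)\in E\Rightarrow(j,i)\in E$. A bidirectional path from $i_1$ to $i_k$ is a sequence of distinct vertices $i_1,\dots,i_k$ with $(i_l,i_{l+1}),(i_{l+1},i_l)\in E$ for all $l$. In a bidirectional graph, a vertex $i$ is 2-reachable from a set $U$ of at least two vertices if, after removing any single vertex other than $i$, there is a bidirectional path from some vertex of $U$ to $i$. $G$ is 2-rooted if there is a set of two vertices (roots) from which every other vertex is 2-reachable. A dual-entry path (DEP) with distinct entry vertices $i,j$ and $\ell\ge1$ inner vertices $v_1,\dots,v_\ell$ has vertex set $\{i,j,v_1,\dots,v_\ell\}$ and edge set $\{(i,v_1),(j,v_1)\}$ if $\ell=1$, and $\{(i,v_1),(j,v_\ell)\}\cup\{(v_r,v_{r+1}),(v_{r+1},v_r):1\le r<\ell\}$ if $\ell\ge2$. A DEP-induced graph $\mathcal L_\kappa$ ($\kappa\ge0$): $\mathcal L_0$ consists of two vertices and no edges; for $h=1,\dots,\kappa$, $\mathcal L_h$ is obtained from $\mathcal L_{h-1}$ by attaching a DEP whose two distinct entry vertices belong to $\mathcal L_{h-1}$ and whose inner vertices are new (taking unions of vertex and edge sets). A spanning subgraph of $G$ has vertex set $V$ and edge set contained in $E$. *)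

From mathcomp Require Import all_boot.
Set Implicit Arguments. Unset Strict Implicit. Unset Printing Implicit Defensive.

Section Graphs.
Variable V : finType.

Definition loopless (E : rel V) : Prop := forall i, ~~ E i i.

Definition bidirectional (E : rel V) : Prop := forall i j, E i j -> E j i.

Definition biedge (E : rel V) : rel V := fun x y => E x y && E y x.

Definition bipath_avoiding (E : rel V) (r u i : V) : Prop :=
  exists p : seq V,
    [/\ path (biedge E) u p, uniq (u :: p), last u p = i & r \notin (u :: p)].

Definition two_reachable (E : rel V) (U : {set V}) (i : V) : Prop :=
  2 <= #|U| /\
  forall r : V, r != i -> exists2 u, u \in U & bipath_avoiding E r u i.

Definition two_rooted (E : rel V) : Prop :=
  exists a b : V, a != b /\
    forall i : V, i \notin [set a; b] -> two_reachable E [set a; b] i.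

(* Edge set of a dual-entry path with entries i, j and inner vertices vs
   (vs nonempty): {(i,v_1),(j,v_l)} ∪ {(v_r,v_{r+1}),(v_{r+1},v_r)}.
   For l = 1 this is {(i,v_1),(j,v_1)}. *)
Definition dep_edges (i j : V) (vs : seq V) : {set V * V} :=
  [set (i, head i vs); (j, last j vs)]
  :|: [set e in zip vs (behead vs)]
  :|: [set e in zip (behead vs) vs].

Inductive dep_induced : {set V} -> {set V * V} -> Prop :=
| dep_base (a b : V) : a != b -> dep_induced [set a; b] set0
| dep_attach (S : {set V}) (F : {set V * V}) (i j : V) (vs : seq V) :
    dep_induced S F -> i \in S -> j \in S -> i != j ->
    vs != [::] -> uniq vs -> all (fun v => v \notin S) vs ->
    dep_induced (S :|: [set x in vs]) (F :|: dep_edges i j vs).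

Definition has_spanning_dep (E : rel V) : Prop :=
  exists F : {set V * V},
    dep_induced [set: V] F /\ forall e, e \in F -> E e.1 e.2.

End Graphs.

(* Reading bidirectional paths as E-paths, both directions go through the
   notion "every vertex of S is 2-reachable from the roots by paths inside S".
   In a DEP-induced graph an inner vertex v_k of the last DEP is reached from
   the entry i along v_1 .. v_k or from the entry j along v_l .. v_k; a removed
   vertex r lies on at most one of these routes, and i, j are reached inside
   the previous graph by induction.  Conversely, given a DEP-induced subgraph
   on S containing the roots and a vertex x outside S, a path from a root to x
   leaves S for the last time along an edge (i, w); a path from a root to w
   avoiding i leaves S for the last time at some j != i, and its remaining
   segment, which ends in w, is a DEP with entries j and i.  Attaching it
   enlarges S until S is everything. *)
From mathcomp Require Import all_boot.
Set Implicit Arguments. Unset Strict Implicit. Unset Printing Implicit Defensive.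

Section SeqPaths.
Variable T : Type.

Lemma path_zip (e : rel T) x s :
  path e x s = all (fun p => e p.1 p.2) (zip (x :: s) s).
Proof. by elim: s x => //= y s IH x; rewrite IH. Qed.

Lemma path_flip_zip (e : rel T) x s :
  path (fun a b => e b a) x s = all (fun p => e p.1 p.2) (zip s (x :: s)).
Proof. by elim: s x => //= y s IH x; rewrite IH. Qed.

Lemma path_suffix (e : rel T) x s s1 y s2 :
  x :: s = s1 ++ y :: s2 -> path e x s -> path e y s2.
Proof.
move=> Es; rewrite -[path e x s]/(sorted e (x :: s)) Es sorted_cat_cons.
by case/andP.
Qed.

Lemma path_rev_cons (e : rel T) x y s :
  path e x (rev (y :: s)) = e x (last y s) && path (fun a b => e b a) y s.
Proof. by rewrite lastI rev_rcons /= rev_path. Qed.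

End SeqPaths.

Lemma split_last_exit (T : eqType) (P : pred T) x s : P x -> ~~ P (last x s) ->
  exists s1 y s2,
    [/\ x :: s = s1 ++ y :: s2, P y, s2 != [::] & all (fun z => ~~ P z) s2].
Proof.
elim/last_ind: s => [|s z IH] Px /=; first by rewrite Px.
rewrite last_rcons => Pz.
have [Pl | /(IH Px) [s1 [y [s2 [Es Py _ s2P]]]]] := boolP (P (last x s)).
  exists (belast x s), (last x s), [:: z]; rewrite /= Pz.
  by split=> //; rewrite -rcons_cons lastI -!cats1 -catA.
exists s1, y, (rcons s2 z); split => //.
- by rewrite -rcons_cons Es rcons_cat.
- by rewrite -size_eq0 size_rcons.
- by rewrite all_rcons Pz.
Qed.

Section TwoRooted.
Variables (V : finType) (E : rel V).
Implicit Types (S T : {set V}) (F : {set V * V}).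

Definition subgraph F : Prop := forall e, e \in F -> E e.1 e.2.

Lemma subgraphU F1 F2 : subgraph (F1 :|: F2) <-> subgraph F1 /\ subgraph F2.
Proof.
split=> [sF | [sF1 sF2] e]; last by rewrite in_setU => /orP[/sF1 | /sF2].
by split=> e eF; apply: sF; rewrite in_setU eF ?orbT.
Qed.

Lemma subgraph_dep_edges i j vs : vs != [::] ->
  subgraph (dep_edges i j vs) <-> path E i vs /\ path E j (rev vs).
Proof.
case: vs => [//|y q] _; rewrite path_rev_cons /= path_zip path_flip_zip.
rewrite /subgraph /dep_edges /=.
split=> [sF | [/andP[Eiy /allP fw] /andP[Ejl /allP bw]] e].
  rewrite (sF (i, y)) ?(sF (j, last y q)) ?inE ?eqxx ?orbT //.
  by split; apply/allP => e ez; apply: sF; rewrite !inE ez ?orbT.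
by rewrite !inE => /orP[/orP[/orP[] /eqP-> | /fw] | /bw].
Qed.

Definition path_within S (r u x : V) : Prop :=
  exists p, [/\ path E u p, uniq (u :: p), last u p = x, r \notin u :: p
              & {subset u :: p <= S}].

Definition rooted_within (a b : V) S : Prop :=
  forall x r, x \in S -> r != x ->
    exists2 u, u \in [set a; b] & path_within S r u x.

Lemma path_within_refl S r x : x \in S -> r != x -> path_within S r x x.
Proof.
move=> xS rx; exists [::]; split=> //; first by rewrite inE.
by move=> v; rewrite inE => /eqP->.
Qed.

Lemma path_within_cat S T r u k q x :
  S \subset T -> {subset q <= T :\: S} -> path E k q -> uniq q ->
  r \notin q -> last k q = x -> path_within S r u k -> path_within T r u x.
Proof.
move=> ST qTS kq uq rq <- [p [up uup pk rp pS]]; exists (p ++ q); split.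
- by rewrite cat_path up pk.
- rewrite -cat_cons cat_uniq uup uq andbT; apply/hasPn => v /qTS /setDP[_].
  exact: contra (@pS v).
- by rewrite last_cat pk.
- by rewrite -cat_cons mem_cat negb_or rp.
- move=> v; rewrite -cat_cons mem_cat => /orP[/pS/(subsetP ST) // | /qTS].
  by case/setDP.
Qed.

Lemma path_within_sub S T r u x :
  S \subset T -> path_within S r u x -> path_within T r u x.
Proof. by move=> ST; apply: (path_within_cat (q := [::])). Qed.

Lemma rooted_within_pair a b : rooted_within a b [set a; b].
Proof. by move=> x r xab rx; exists x => //; apply: path_within_refl. Qed.

Lemma rooted_within_attach a b S i j vs :
  rooted_within a b S -> i \in S -> j \in S -> i != j -> uniq vs ->
  all (fun v => v \notin S) vs -> path E i vs -> path E j (rev vs) ->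
  rooted_within a b (S :|: [set v in vs]).
Proof.
set T := S :|: _ => R iS jS ij uvs vsS pi pj x r.
have ST : S \subset T by apply: subsetUl.
have vsT : {subset vs <= T :\: S}.
  by move=> v vvs; rewrite !inE vvs orbT andbT; apply: (allP vsS).
rewrite in_setU inE => /orP[xS | xvs] rx.
  by have [u uab ux] := R x r xS rx; exists u => //; apply: path_within_sub ux.
have [s1 [s2 Evs]] : exists s1 s2, vs = s1 ++ x :: s2.
  by case/splitPr: xvs => s1 s2; exists s1, s2.
have vsE v : (v \in vs) = (v \in s1) || (v \in x :: s2) by rewrite Evs mem_cat.
move: uvs; rewrite Evs cat_uniq => /and3P[us1 /hasPn s1x2 uxs2].
have us1x : uniq (rcons s1 x) by rewrite rcons_uniq us1 s1x2 ?mem_head.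
have [ris1 | ] := boolP (r \in i :: s1).
  have rj : r != j.
    apply: contraTneq ris1 => ->; rewrite inE negb_or eq_sym ij /=.
    by apply: contraL jS => js1; apply: (allP vsS); rewrite vsE js1.
  have [u uab uj] := R j r jS rj; exists u => //.
  apply: (path_within_cat (q := rev (x :: s2)) ST _ _ _ _ _ uj).
  - by move=> v; rewrite mem_rev => vs2; apply: vsT; rewrite vsE vs2 orbT.
  - by move: pj; rewrite Evs rev_cat cat_path => /andP[].
  - by rewrite rev_uniq.
  - rewrite mem_rev; move: ris1; rewrite inE => /orP[/eqP-> | rs1].
      by apply: contraL iS => ixs; apply: (allP vsS); rewrite vsE ixs orbT.
    exact: contraL (s1x2 r) rs1.
  - by rewrite rev_cons last_rcons.
rewrite inE negb_or => /andP[ri rs1].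
have [u uab ui] := R i r iS ri; exists u => //.
apply: (path_within_cat (q := rcons s1 x) ST _ _ _ _ _ ui) => //.
- move=> v; rewrite mem_rcons inE => /orP[/eqP-> | vs1]; apply: vsT.
    by rewrite vsE mem_head orbT.
  by rewrite vsE vs1.
- by move: pi; rewrite Evs -cat_rcons cat_path => /andP[].
- by rewrite mem_rcons inE negb_or rx.
- by rewrite last_rcons.
Qed.

Lemma dep_rooted_within S F : dep_induced S F -> subgraph F ->
  exists a b, a != b /\ rooted_within a b S.
Proof.
elim=> [a b ab _ | {}S {}F i j vs _ IH iS jS ij vs0 uvs vsS].
  by exists a, b; split=> //; apply: rooted_within_pair.
move/subgraphU => [/IH [a [b [ab R]]] /(subgraph_dep_edges _ _ vs0) [pi pj]].
by exists a, b; split=> //; exact: rooted_within_attach R iS jS ij uvs vsS pi pj.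
Qed.

Hypothesis bidE : bidirectional E.

Lemma bidirectional_sym x y : E x y = E y x.
Proof. by apply/idP/idP; apply: bidE. Qed.

Lemma biedgeE : biedge E =2 E.
Proof. by move=> x y; rewrite /biedge bidirectional_sym andbb. Qed.

Lemma two_rootedE :
  two_rooted E <-> exists a b, a != b /\ rooted_within a b [set: V].
Proof.
have bipathE r u x : bipath_avoiding E r u x <-> path_within [set: V] r u x.
  split=> [[p [pp up px rp]] | [p [pp up px rp _]]]; exists p.
    by rewrite (eq_path biedgeE) in pp; split=> // v; rewrite in_setT.
  by rewrite -(eq_path biedgeE) in pp.
split=> [[a [b [ab R]]] | [a [b [ab R]]]]; exists a, b; split=> // x.
  move=> r _ rx.
  have [xab | /R [_ /(_ r rx) [u uab /bipathE]]] := boolP (x \in [set a; b]).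
    by exists x => //; apply: path_within_refl.
  by exists u.
move=> _; split=> [|r rx]; first by rewrite cards2 ab.
by have [u uab /bipathE] := R x r (in_setT x) rx; exists u.
Qed.

Lemma ear_exists a b S x :
  rooted_within a b [set: V] -> a \in S -> b \in S -> x \notin S ->
  exists i j vs, [/\ i \in S, j \in S, i != j & subgraph (dep_edges i j vs)]
    /\ [/\ vs != [::], uniq vs & all (fun v => v \notin S) vs].
Proof.
move=> R aS bS xS.
have abS u : u \in [set a; b] -> u \in S by rewrite !inE => /orP[] /eqP->.
have ax : a != x by apply: contraNneq xS => <-.
(* Any removed vertex other than x would do for this first path. *)
have [u /abS uS [p [pp _ px _ _]]] := R x a (in_setT x) ax.
have lpS : last u p \notin S by rewrite px.
have [s1 [k [[|w s2] [Ep kS //= _ /andP[wS _]]]]] :=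
  split_last_exit (P := fun v => v \in S) uS lpS.
have /andP[Ekw _] := path_suffix Ep pp.
have kw : k != w by apply: contraNneq wS => <-.
have [u' /abS u'S [p' [pp' up' pw kp' _]]] := R w k (in_setT w) kw.
have lp'S : last u' p' \notin S by rewrite pw.
have [t1 [j [vs [Ep' jS vs0 vsS]]]] :=
  split_last_exit (P := fun v => v \in S) u'S lp'S.
have uvs : uniq vs by move: up'; rewrite Ep' cat_uniq => /and3P[_ _ /andP[]].
exists j, k, vs; split=> //; split=> //.
  by apply: contraNneq kp' => <-; rewrite Ep' mem_cat mem_head orbT.
apply/subgraph_dep_edges => //.
have jvs := path_suffix Ep' pp'.
split=> //; case: vs vs0 Ep' jvs {vsS uvs} => [//|y q] _ Ep' /= /andP[_ yq].
have lq : last y q = w by rewrite -pw -(last_cons u') Ep' last_cat.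
by rewrite path_rev_cons lq Ekw (eq_path (fun a b => bidirectional_sym b a)).
Qed.

Lemma rooted_spanning_dep a b :
  a != b -> rooted_within a b [set: V] -> has_spanning_dep E.
Proof.
move=> ab R.
suff grow n S F : #|~: S| <= n -> dep_induced S F -> subgraph F ->
    a \in S -> b \in S -> has_spanning_dep E.
  apply: (grow _ _ _ (leqnn _) (dep_base ab)); rewrite ?inE ?eqxx ?orbT //.
  by move=> e; rewrite inE.
elim: n S F => [|n IH] S F leS dS sF aS bS;
  have [SC0 | [x]] := set_0Vmem (~: S).
- by exists F; rewrite -[S]setCK SC0 setC0 in dS.
- by move: leS; rewrite leqn0 cards_eq0 => /eqP->; rewrite inE.
- by exists F; rewrite -[S]setCK SC0 setC0 in dS.
rewrite inE => xS.
have [i [j [vs [[iS jS ij sD] [vs0 uvs vsS]]]]] := ear_exists R aS bS xS.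
apply: (IH _ _ _ (dep_attach dS iS jS ij vs0 uvs vsS)); rewrite ?inE ?aS ?bS //.
- rewrite -ltnS; apply: leq_trans leS; apply/proper_card/properP.
  split; first by rewrite setCS subsetUl.
  case: vs vs0 vsS {sD uvs} => [//|y q] _ /andP[yS _].
  by exists y; rewrite !inE ?yS ?eqxx ?orbT.
- exact/subgraphU.
Qed.

End TwoRooted.

Theorem lemma1 (V : finType) (E : rel V) :
  loopless E -> bidirectional E ->
  (two_rooted E <-> has_spanning_dep E).
Proof.
move=> _ bidE; split=> [/(two_rootedE bidE) [a [b [ab R]]] | [F [dF sF]]].
  exact: rooted_spanning_dep R.
exact/(two_rootedE bidE)/(dep_rooted_within dF sF).
Qed.
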